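(* Let $k\ge 2$ be an integer and let $G=\Theta(2,2,2k)$. Then $P_\ell(G,m)=P(G,m)$ for every integer $m\ge 3$.
   Context: $\Theta(l_1,l_2,l_3)$ denotes the graph consisting of two end vertices joined by three internally disjoint paths of lengths $l_1,l_2,l_3$. All graphs are finite and simple. For a list assignment $L$ (assigning a set $L(v)$ of colors to each vertex $v$), $P(G,L)$ is the number of proper colorings $f$ of $G$ with $f(v)\in L(v)$ for all $v$; an $m$-assignment has $|L(v)|=m$ for all $v$. $P(G,m)$ is the chromatic polynomial of $G$, and the list color function $P_\ell(G,m)$ is the minimum of $P(G,L)$ over all $m$-assignments $L$ for $G$. *)

From mathcomp Require Import all_boot.
Set Implicit Arguments. Unset Strict Implicit. Unset Printing Implicit Defensive.

(* A finite simple graph: vertex finType V with adjacency relation e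
   (symmetric and irreflexive for the theta graphs below). *)

Definition proper (V : finType) (e : rel V) (f : V -> nat) : bool :=
  [forall x, forall y, e x y ==> (f x != f y)].

Definition m_assignment (V : finType) (m : nat) (L : V -> seq nat) : Prop :=
  forall v, uniq (L v) /\ size (L v) = m.

Definition color_bound (V : finType) (L : V -> seq nat) : nat :=
  \max_(v : V) \max_(c <- L v) c.+1.

(* P(G,L): number of proper colourings f with f v \in L v for all v.
   Every such colouring takes values below color_bound L, so it is
   counted among functions V -> 'I_(color_bound L). *)
Definition P_list (V : finType) (e : rel V) (L : V -> seq nat) : nat :=
  #|[set f : {ffun V -> 'I_(color_bound L)} |
      [forall v, (val (f v) \in L v)] && proper e (fun v => val (f v))]|.

Definition chrom (V : finType) (e : rel V) (m : nat) : nat :=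
  #|[set f : {ffun V -> 'I_m} | proper e (fun v => val (f v))]|.

Definition is_list_color_fun (V : finType) (e : rel V) (m n : nat) : Prop :=
  (exists L : V -> seq nat, m_assignment m L /\ P_list e L = n) /\
  (forall L : V -> seq nat, m_assignment m L -> n <= P_list e L).

(* Theta graph Theta(l_0,l_1,l_2): two end vertices (inl false / inl true)
   and, for each path i, internal vertices (i, j) with j < l_i - 1, where
   (i, j) is at distance j+1 from the end inl false along path i. *)
Definition tl (l1 l2 l3 : nat) (i : 'I_3) : nat := nth 0 [:: l1; l2; l3] i.

Definition theta_vertex (l : 'I_3 -> nat) : finType :=
  (bool + {i : 'I_3 & 'I_(l i).-1})%type.

Definition tpos (l : 'I_3 -> nat) (x : theta_vertex l) (i : 'I_3) : option nat :=
  match x with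
  | inl false => Some 0
  | inl true => Some (l i)
  | inr (existT i' j) => if i' == i then Some (nat_of_ord j).+1 else None
  end.

Definition theta_adj (l : 'I_3 -> nat) : rel (theta_vertex l) :=
  fun x y => [exists i : 'I_3,
    match tpos x i, tpos y i with
    | Some a, Some b => (a.+1 == b) || (b.+1 == a)
    | _, _ => false
    end].
Arguments theta_adj l : clear implicits.
Arguments chrom V e m : clear implicits.
Arguments is_list_color_fun V e m n : clear implicits.

(* Colour the ends u, w of the theta graph first.  The number of L-colourings is
   the sum, over x in L(u) and y in L(w), of |L(a) \ {x,y}| |L(b) \ {x,y}| N(x,y),
   where a, b are the inner vertices of the two short paths and N(x,y) counts the
   L-colourings of the long path with ends precoloured x and y; with all lists
   equal this sum is P(G,m).  For an arbitrary m-assignment, each N(x,y) with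
   x <> y is at least its value for equal lists, every row sum sum_y N(x,y) is
   at least (m-1)^(2k), and the diagonal sum_x N(x,x) counts the list colourings
   of an even cycle, which is at least its chromatic polynomial.  When
   L(u) <> L(w), the lost diagonal terms are paid for by the pairs x <> y with
   x or y outside L(a) or L(b), which leave an extra colour at a or b. *)

From mathcomp Require Import all_boot.
From mathcomp Require Import zify.
Set Implicit Arguments. Unset Strict Implicit. Unset Printing Implicit Defensive.

Section FinsetSums.
Variable T : finType.
Implicit Types (A B : {set T}) (x : T).

Lemma leq_sum_subset A B (F : T -> nat) :
  A \subset B -> \sum_(i in A) F i <= \sum_(i in B) F i.
Proof.
move=> sAB; rewrite [X in _ <= X](big_setID A) /= (setIidPr sAB).
exact: leq_addr.
Qed.

Lemma subset_of_card A n : n <= #|A| -> exists2 B : {set T}, B \subset A & #|B| = n.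
Proof.
elim: n => [|n IHn] ltnA; first by exists set0; rewrite ?sub0set ?cards0.
have [B sBA cardB] := IHn (ltnW ltnA).
have /properP[_ [a aA aB]] : B \proper A by rewrite properEcard sBA cardB.
exists (a |: B); first by rewrite subUset sub1set aA sBA.
by rewrite cardsU1 aB cardB.
Qed.

Lemma sum_mem_card A : \sum_x (x \in A) = #|A|.
Proof. by rewrite -sum1_card [RHS]big_mkcond; apply: eq_bigr => x _; case: (x \in A). Qed.

Lemma sum_mem_cond_card A (P : pred T) : \sum_(x in A) P x = #|[set x in A | P x]|.
Proof.
rewrite -sum1_card [RHS]big_mkcond [LHS]big_mkcond; apply: eq_bigr => x _.
by rewrite inE; case: (x \in A); case: (P x).
Qed.

Lemma sum_eq_mul A x (F : T -> nat) : \sum_(y in A) (x == y) * F y = (x \in A) * F x.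
Proof.
case: (boolP (x \in A)) => xA; last first.
  by rewrite big1 // => y yA; case: eqP yA xA => // ->->.
rewrite (bigD1 x) //= eqxx mul1n big1 ?addn0 // => y /andP[_ yx].
by rewrite eq_sym (negbTE yx).
Qed.

Lemma sum_neq A x : \sum_(y in A) (x != y) = #|A| - (x \in A).
Proof.
case: (boolP (x \in A)) => xA; last first.
  by rewrite subn0 -sum1_card; apply: eq_bigr => y yA; case: eqP yA xA => // ->->.
rewrite (bigD1 x) //= eqxx add0n (cardsD1 x A) xA add1n subn1 -sum1_card.
apply: eq_big => [y|y /andP[_ yx]]; first by rewrite !inE andbC.
by rewrite eq_sym yx.
Qed.

Lemma card_setD2 A x y :
  #|A :\ x :\ y| + (x \in A) + ((y != x) && (y \in A)) = #|A|.
Proof. by rewrite (cardsD1 x A) (cardsD1 y (A :\ x)) !inE; lia. Qed.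

End FinsetSums.

Section ListPaths.
Variable C : finType.
Implicit Types (W : nat -> {set C}) (X Z : {set C}).

(* [npath W x r y] is the number of proper colourings of a path
   x, v_0, ..., v_(r-1), y whose ends are precoloured x and y and whose inner
   vertex v_i is coloured from the list W i. *)
Fixpoint npath W (x : C) (r : nat) (y : C) : nat :=
  if r is r'.+1 then \sum_(z in W r' | z != y) npath W x r' z else x != y.

Lemma eq_npath W W' x r y :
  (forall i, i < r -> W i = W' i) -> npath W x r y = npath W' x r y.
Proof.
elim: r y => [|r IHr] y eqW //=.
rewrite eqW //; apply: eq_bigr => z _; apply: IHr => i ltir.
exact/eqW/ltnW.
Qed.

Lemma npath_cat W x s t y :
  npath W x (s + t.+1) y =
  \sum_(z in W s) npath W x s z * npath (fun i => W (s.+1 + i)) z t y.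
Proof.
elim: t y => [|t IHt] y.
  rewrite addn1 /= big_mkcondr /=; apply: eq_bigr => z _.
  by case: (z != y); rewrite ?muln1 ?muln0.
rewrite addnS /= (eq_bigr _ (fun d _ => IHt d)) exchange_big /=.
by apply: eq_bigr => z _; rewrite big_distrr addSnnS.
Qed.

(* [npath_min m r j] bounds the sum of [npath W x r z] over any [j] targets [z]
   when all lists have [m] colours: a sum over [Z] at length [r.+1] counts each
   [d \in W r] [#|Z| - (d \in Z)] times, and [W r :\: Z] has at least
   [m - #|Z|] elements. *)
Fixpoint npath_min (m r j : nat) : nat :=
  if r is r'.+1 then
    (if j is 0 then 0 else j.-1 * npath_min m r' m + npath_min m r' (m - j))
  else j.-1.

Lemma npath_min_leq_sum m W x r Z : (forall i, #|W i| = m) ->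
  #|Z| <= m -> npath_min m r #|Z| <= \sum_(z in Z) npath W x r z.
Proof.
move=> cardW; elim: r x Z => [|r IHr] x Z cardZ /=.
  by rewrite sum_neq; case: (x \in Z); lia.
case eqZ: #|Z| => [|j] //.
have -> : \sum_(z in Z) \sum_(d in W r | d != z) npath W x r d =
          \sum_(d in W r) (\sum_(z in Z) (d != z)) * npath W x r d.
  under eq_bigr do rewrite big_mkcondr.
  rewrite exchange_big /=; apply: eq_bigr => d _; rewrite big_distrl /=.
  by apply: eq_bigr => z _; case: (d != z); rewrite ?mul1n ?mul0n.
have split_count d : (\sum_(z in Z) (d != z)) * npath W x r d =
                      j * npath W x r d + (d \notin Z) * npath W x r d.
  by rewrite sum_neq eqZ; case: (d \in Z); rewrite /= ?subn0 ?subn1 ?mulSn; lia.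
rewrite (eq_bigr _ (fun d _ => split_count d)) big_split /= -big_distrr /=.
have sumW := IHr x (W r); rewrite cardW leqnn in sumW.
have [B sB cardB] : exists2 B : {set C}, B \subset W r :\: Z & #|B| = m - j.+1.
  apply: subset_of_card; rewrite cardsD.
  have : #|W r :&: Z| <= #|Z| by apply/subset_leq_card/subsetIr.
  by rewrite cardW eqZ; lia.
have sumB := IHr x B; rewrite cardB leq_subr in sumB.
have sumB_le : \sum_(z in B) npath W x r z <= \sum_(d in W r) (d \notin Z) * npath W x r d.
  apply: leq_trans (leq_sum_subset _ sB) _.
  rewrite [X in _ <= X](big_setID Z) /=.
  under [X in _ <= _ + X]eq_bigr => d /setDP[_ /negbTE->] do rewrite mul1n.
  exact: leq_addl.
apply: leq_add; last exact: leq_trans (sumB isT) sumB_le.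
by rewrite leq_mul2l sumW ?orbT.
Qed.

(* [cpath m r] counts the proper [m]-colourings of a path with [r] inner vertices
   and precoloured ends, the ends being coloured alike when [r] is even and
   differently when [r] is odd. *)
Fixpoint cpath (m r : nat) : nat :=
  if r is r'.+1 then m.-1 * cpath m r' + (if odd r' then 0 else m - 2) else 0.

Lemma cpath_closed m r : 2 <= m ->
  m * cpath m r + (if odd r then 1 else m.-1) = m.-1 ^ r.+1.
Proof.
move=> m2; elim: r => [|r IHr] /=; first by rewrite muln0 expn1.
by rewrite expnS -IHr; case: (odd r) => /=; nia.
Qed.

Lemma npath_min_values m r : 2 <= m ->
  [/\ npath_min m r m = m.-1 ^ r.+1, npath_min m r 1 = cpath m r
    & npath_min m r m.-1 = cpath m r.+1].
Proof.
case: m => [|[|n]] // _; elim: r => [|r [IHm IH1 IHm1]].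
  by rewrite /= expn1; split=> //; lia.
have closed := cpath_closed r (isT : 2 <= n.+2).
split => /=.
- by rewrite subnn (_ : npath_min _ r 0 = 0) ?addn0 ?IHm -?expnS //; case: (r).
- by rewrite subn1 /= IHm1 mul0n.
- rewrite (_ : n.+2 - n.+1 = 1) ?IHm ?IH1; last by lia.
  by case: (odd r) closed => /= closed; nia.
Qed.

Lemma npath_ge_cpath m W x r y : 2 <= m -> (forall i, #|W i| = m) ->
  cpath m r <= npath W x r y.
Proof.
move=> m2 cardW; have [_ <- _] := npath_min_values r m2.
by have := npath_min_leq_sum x r (Z := [set y]) cardW; rewrite cards1 big_set1; apply; lia.
Qed.

Lemma npath_const m X W r x y : 2 <= m -> #|X| = m -> (forall i, W i = X) ->
  x \in X -> y \in X ->
  npath W x r y = cpath m r + (if odd r then x == y else x != y).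
Proof.
move=> m2 cardX eqW; elim: r x y => [|r IHr] x y xX yX //=.
rewrite eqW (eq_bigl (mem (X :\ y))); last by move=> z; rewrite !inE andbC.
under eq_bigr => z /setD1P[_ zX] do rewrite IHr //.
rewrite big_split /= sum_nat_const.
have cardXy : #|X :\ y| = m.-1 by rewrite (cardsD1 y X) yX in cardX; lia.
case: (odd r) => /=.
- have := sum_eq_mul (X :\ y) x (fun=> 1); under eq_bigr do rewrite muln1.
  by rewrite muln1 => ->; rewrite !inE xX andbT cardXy addn0.
- rewrite sum_neq !inE xX andbT cardXy.
  have [_|xy] := eqVneq x y; first lia.
  have : 0 < #|X :\ y| by apply/card_gt0P; exists x; rewrite !inE xy.
  by rewrite cardXy; lia.
Qed.

End ListPaths.

Section ListPathColourings.
Variables (C : finType) (W : nat -> {set C}).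

Definition list_path_colouring r x y (g : {ffun 'I_r -> C}) : bool :=
  [forall i : 'I_r, g i \in W i] &&
  path (fun a b => a != b) x (rcons [seq g i | i <- enum 'I_r] y).

Definition ffun_rcons r (g : {ffun 'I_r -> C}) (c : C) : {ffun 'I_r.+1 -> C} :=
  [ffun i : 'I_r.+1 => if insub (val i) is Some j then g j else c].

Lemma ffun_rcons_widen r g c (j : 'I_r) : ffun_rcons g c (widen_ord (leqnSn r) j) = g j.
Proof. by rewrite ffunE /= valK. Qed.

Lemma ffun_rcons_max r g c : ffun_rcons g c (@ord_max r) = c.
Proof. by rewrite ffunE /= insubF // ltnn. Qed.

Lemma ffun_rcons_bij r : bijective (fun p : {ffun 'I_r -> C} * C => ffun_rcons p.1 p.2).
Proof.
exists (fun g : {ffun 'I_r.+1 -> C} =>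
        ([ffun j => g (widen_ord (leqnSn r) j)], g ord_max)).
  move=> [g c] /=; rewrite ffun_rcons_max; congr (_, _).
  by apply/ffunP => j; rewrite ffunE ffun_rcons_widen.
move=> g; apply/ffunP => i; rewrite ffunE /=.
case: insubP => [j _ val_j | ]; first by rewrite ffunE; congr (g _); apply: val_inj.
by move=> ge_i; congr (g _); apply: val_inj => /=; have := ltn_ord i; lia.
Qed.

Lemma sum_ffunS r (F : {ffun 'I_r.+1 -> C} -> nat) :
  \sum_g F g = \sum_(g : {ffun 'I_r -> C}) \sum_(c : C) F (ffun_rcons g c).
Proof.
rewrite pair_big /= (reindex _ (onW_bij _ (ffun_rcons_bij r))).
by apply: eq_bigl.
Qed.

Lemma map_ffun_rcons r g c :
  [seq ffun_rcons g c i | i <- enum 'I_r.+1] = rcons [seq g i | i <- enum 'I_r] c.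
Proof.
rewrite enum_ordSr map_rcons ffun_rcons_max -map_comp; congr (rcons _ _).
by apply: eq_map => j /=; rewrite ffun_rcons_widen.
Qed.

Lemma list_path_colouring_rcons r x y (g : {ffun 'I_r -> C}) c :
  list_path_colouring x y (ffun_rcons g c) =
  [&& c \in W r, c != y & list_path_colouring x c g].
Proof.
rewrite /list_path_colouring map_ffun_rcons rcons_path last_rcons.
have -> : [forall i : 'I_r.+1, ffun_rcons g c i \in W i] =
          [forall i : 'I_r, g i \in W i] && (c \in W r).
  apply/forallP/andP => [inW | [/forallP inW cW] i].
    split; last by have := inW ord_max; rewrite ffun_rcons_max.
    by apply/forallP => j; have := inW (widen_ord (leqnSn r) j); rewrite ffun_rcons_widen.
  have [ltir | geir] := ltnP i r.
    by rewrite (_ : i = widen_ord (leqnSn r) (Ordinal ltir)) ?ffun_rcons_widen //; apply: val_inj.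
  rewrite (_ : i = ord_max) ?ffun_rcons_max //.
  by apply: val_inj => /=; have := ltn_ord i; lia.
by case: (c \in W r); case: (c != y); rewrite /= ?andbF ?andbT.
Qed.

Lemma npathE r x y : npath W x r y = \sum_(g : {ffun 'I_r -> C}) list_path_colouring x y g.
Proof.
elim: r y => [|r IHr] y.
  rewrite /= (eq_bigr (fun=> nat_of_bool (x != y))); last first.
    move=> g _; rewrite /list_path_colouring enum_ord0 /= andbT.
    by rewrite (_ : [forall i : 'I_0, _] = true) //; apply/forallP => -[].
  by rewrite sum_nat_const card_ffun card_ord expn0 mul1n.
rewrite sum_ffunS exchange_big /= big_mkcond /=; apply: eq_bigr => c _.
under [RHS]eq_bigr do rewrite list_path_colouring_rcons.
by case: (c \in W r); case: (c != y); rewrite /= ?IHr // big1.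
Qed.

End ListPathColourings.

Section ListCycles.
Variable C : finType.
Implicit Types (W : nat -> {set C}) (X : {set C}).

Definition ncycle W X r := \sum_(x in X) npath W x r x.

(* The lists of the same cycle, read from the inner vertex after [s]. *)
Definition rotate_lists W X s t i :=
  if i < t then W (s.+1 + i) else if i == t then X else W (i - t.+1).

Lemma ncycle_rotate W X s t :
  ncycle W X (s + t.+1) = ncycle (rotate_lists W X s t) (W s) (t + s.+1).
Proof.
rewrite /ncycle (eq_bigr _ (fun x _ => npath_cat W x s t x)) exchange_big /=.
apply: eq_bigr => z _; rewrite npath_cat /rotate_lists ltnn eqxx.
apply: eq_bigr => x _; rewrite mulnC; congr (_ * _).
  by apply: eq_npath => i ->.
apply: eq_npath => i _ /=.
rewrite ifN ?ifN; [congr (W _) | |]; lia.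
Qed.

Lemma ncycle_ge_new_colour m W X r c : 2 <= m -> (forall i, #|W i| = m) ->
  #|X| = m -> c \in X -> c \notin W r ->
  m.-1 ^ r.+1 + m.-1 * cpath m r.+1 <= ncycle W X r.+1.
Proof.
move=> m2 cardW cardX cX cWr; have [npathW _ _] := npath_min_values r m2.
rewrite /ncycle (bigD1 c) //=; apply: leq_add.
  rewrite (eq_bigl (mem (W r))); last first.
    by move=> d; apply/andb_idr => dW; apply: contraNneq cWr => <-.
  by have := npath_min_leq_sum c r (Z := W r) cardW; rewrite cardW npathW; apply.
have cardXc : #|[pred x in X | x != c]| = m.-1.
  by rewrite -cardX (cardsD1 c X) cX; apply: eq_card => x; rewrite !inE andbC.
apply: leq_trans (_ : \sum_(x in X | x != c) cpath m r.+1 <= _).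
  by rewrite sum_nat_const cardXc.
by apply: leq_sum => x _; exact: npath_ge_cpath.
Qed.

Lemma ncycle_const m W X r : 2 <= m -> odd r -> #|X| = m ->
  (forall i, i < r -> W i = X) -> ncycle W X r = m * (cpath m r).+1.
Proof.
move=> m2 odd_r cardX eqW.
rewrite /ncycle (eq_bigr (fun=> (cpath m r).+1)) => [|x xX].
  by rewrite sum_nat_const cardX.
rewrite (@eq_npath _ W (fun=> X)) //.
by rewrite (npath_const r m2 cardX (fun=> erefl X) xX xX) odd_r eqxx addn1.
Qed.

Lemma cpath_cycle_arith m r : 3 <= m -> odd r -> 3 <= r ->
  m * (cpath m r).+1 <= m.-1 ^ r + m.-1 * cpath m r.
Proof.
move=> m3 odd_r r3; have := cpath_closed r (ltnW m3); rewrite odd_r expnS.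
case: m m3 => [|q] //= m3 closed.
have : q ^ 3 <= q ^ r by apply: leq_pexp2l; lia.
rewrite (_ : q ^ 3 = q * q * q) ?expnS ?expn0 ?muln1 ?mulnA //.
by move: closed; set P := q ^ r; set c := cpath q.+1 r; nia.
Qed.

(* Either each list is contained in the previous one, and then all lists equal
   [X], or some [W s] has a colour missing from its predecessor, and rotating the
   cycle to start at [W s] brings [ncycle_ge_new_colour] into play. *)
Lemma ncycle_ge m W X r : 3 <= m -> odd r -> 3 <= r -> #|X| = m ->
  (forall i, #|W i| = m) -> m * (cpath m r).+1 <= ncycle W X r.
Proof.
move=> m3 odd_r r3 cardX cardW; have m2 : 2 <= m by lia.
pose prev (s : 'I_r) := if val s is s'.+1 then W s' else X.
have [s /subsetPn[c cWs cprev] | no_new] := pickP (fun s : 'I_r => ~~ (W s \subset prev s)).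
  have [t def_r] : exists t, r = s + t.+1 by exists (r - s.+1); have := ltn_ord s; lia.
  have r_eq : (t + s).+1 = r by lia.
  rewrite [in ncycle _ _ r]def_r ncycle_rotate addnS.
  apply: leq_trans (ncycle_ge_new_colour (c := c) m2 _ _ cWs _).
  - by rewrite r_eq; exact: cpath_cycle_arith.
  - by move=> i; rewrite /rotate_lists; case: ifP => _; [|case: ifP => _]; rewrite ?cardW ?cardX.
  - exact: cardW.
  - move: cprev; rewrite /prev /rotate_lists /=.
    case: (nat_of_ord s) => [|s'] cprev; first by rewrite addn0 ltnn eqxx.
    rewrite ifN ?ifN; try lia.
    by rewrite (_ : t + s'.+1 - t.+1 = s') //; lia.
have subX i : i < r -> W i \subset X.
  elim: i => [|i IHi] ltir; have /negbFE := no_new (Ordinal ltir); rewrite /prev //=.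
  by move/subset_trans; apply; apply/IHi/ltnW.
apply: eq_leq; apply/esym/ncycle_const => // i ltir.
by apply/eqP; rewrite eqEcard (subX _ ltir) cardX cardW leqnn.
Qed.

End ListCycles.

Section ThetaPositions.
Variable l : 'I_3 -> nat.
Hypothesis l_gt0 : forall i, 0 < l i.
Local Notation V := (theta_vertex l).

Definition theta_at (i : 'I_3) (p : nat) : V :=
  if p is p'.+1 then
    (if insub p' : option 'I_(l i).-1 is Some j then inr (existT _ i j) else inl true)
  else inl false.

Lemma tpos_theta_at i p : p <= l i -> tpos (theta_at i p) i = Some p.
Proof.
case: p => [|p] //= le_pl; case: insubP => [j _ val_j | ge_p] /=.
  by rewrite eqxx val_j.
by congr Some; move: ge_p; rewrite -ltnNge; lia.
Qed.

Lemma theta_at_end i : theta_at i (l i) = inl true.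
Proof. by rewrite -[X in theta_at i X](prednK (l_gt0 i)) /= insubF // ltnn. Qed.

Lemma tposP (v : V) i p : tpos v i = Some p -> v = theta_at i p /\ p <= l i.
Proof.
case: v => [[] | [i' j]] /=; [move=> [<-] | move=> [<-] | ].
- by rewrite theta_at_end.
- by [].
case: eqP => // eq_i [<-]; subst i'.
by rewrite /theta_at valK; split=> //; have := ltn_ord j; lia.
Qed.

Lemma theta_adj_at i p : p < l i -> theta_adj l (theta_at i p) (theta_at i p.+1).
Proof.
move=> lt_pl; apply/existsP; exists i.
by rewrite tpos_theta_at ?tpos_theta_at ?eqxx // ltnW.
Qed.

Lemma proper_theta (f : V -> nat) :
  proper (theta_adj l) f =
  [forall i : 'I_3, forall p : 'I_(l i), f (theta_at i p) != f (theta_at i p.+1)].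
Proof.
apply/forallP/forallP => [proper_f i | at_neq v1].
  apply/forallP => p; have /forallP/(_ (theta_at i p.+1)) := proper_f (theta_at i p).
  by rewrite theta_adj_at.
apply/forallP => v2; apply/implyP => /existsP[i].
case tpos1: (tpos v1 i) => [a|] //; case tpos2: (tpos v2 i) => [b|] //.
have [-> le_al] := tposP tpos1; have [-> le_bl] := tposP tpos2.
case/orP=> /eqP eq_ab; subst.
  by have /forallP/(_ (Ordinal le_bl)) := at_neq i.
by rewrite eq_sym; have /forallP/(_ (Ordinal le_al)) := at_neq i.
Qed.

End ThetaPositions.
Arguments theta_at : simpl never.

(* The chromatic polynomial of the theta graph: ends coloured alike contribute
   [(m-1)^2 (c+1)], ends coloured differently [(m-2)^2 c], with [c = cpath m r]. *)
Definition theta_chrom m r :=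
  m * (m.-1 ^ 2 * (cpath m r).+1 + m.-1 * (m - 2) ^ 2 * cpath m r).

Lemma theta_chromE m r : 3 <= m -> odd r ->
  theta_chrom m r =
  (m - 2) ^ 2 * (m * m.-1 ^ r.+1) + m * (2 * m - 3) * (cpath m r).+1.
Proof.
move=> m3 odd_r; have := cpath_closed r (ltnW m3); rewrite odd_r /theta_chrom => <-.
move: (cpath m r) => c; have [n ->] : exists n, m = n + 3 by exists (m - 3); lia.
have -> : (n + 3).-1 = n + 2 by lia.
have -> : n + 3 - 2 = n + 1 by lia.
have -> : 2 * (n + 3) - 3 = 2 * n + 3 by lia.
rewrite !expnS expn0 !muln1 !mulnDr !mulnDl; lia.
Qed.

Lemma cpath_ge m r : 3 <= m -> odd r -> 3 <= r -> m <= cpath m r.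
Proof.
move=> m3 odd_r r3; have := cpath_closed r (ltnW m3); rewrite odd_r.
case: m m3 => [|q] //= m3 closed.
have : q ^ 4 <= q ^ r.+1 by apply: leq_pexp2l; lia.
rewrite (_ : q ^ 4 = q * q * (q * q)); last by rewrite !expnS expn0 muln1 !mulnA.
move: closed; set P := q ^ r.+1; set c := cpath q.+1 r => closed le_P.
have le_q2 : 2 * q <= q * q by nia.
have le_q4 : 2 * (q * q) <= q * q * (q * q) by nia.
rewrite leqNgt; apply/negP => lt_c.
have : q.+1 * c <= q.+1 * q by rewrite leq_mul2l; lia.
lia.
Qed.

Lemma theta_offdiag_arith m c t K : 3 <= m -> m <= c -> t < m -> 2 * m * (m - t) <= K ->
  m * (2 * m - 3) * c.+1 <= (2 * m - 3) * (c * t) + (m - 2) * c * K.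
Proof.
move=> m3 le_mc lt_tm le_K.
have [u def_m] : exists u, m = t + u.+1 by exists (m - t.+1); lia.
have le_cu : m <= c * u.+1 by apply: leq_trans le_mc (leq_pmulr _ _).
have [n def_n] : exists n, m = n + 3 by exists (m - 3); lia.
apply: leq_trans (leq_add (leqnn _) (leq_mul (leqnn ((m - 2) * c)) le_K)).
have -> : m - t = u.+1 by lia.
have -> : m - 2 = n + 1 by lia.
have -> : 2 * m - 3 = 2 * n + 3 by lia.
have key : (2 * n + 3) * (n + 3) <= (2 * n * n + 6 * n + 3) * (c * u.+1).
  by apply: leq_mul; [nia | rewrite -def_n].
have sumQP : (2 * n + 3) * (c * t + c * u.+1) = (2 * n + 3) * (c * (n + 3)).
  by rewrite -mulnDr; congr (_ * (_ * _)); lia.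
rewrite def_n (_ : (n + 1) * c * (2 * (n + 3) * u.+1) = 2 * (n + 1) * (n + 3) * (c * u.+1));
  last by lia.
move: sumQP key; move: (c * t) (c * u.+1) => Q P.
lia.
Qed.

Section ThetaSums.
Variable C : finType.
Implicit Types (X Y A B : {set C}) (W : nat -> {set C}).

Definition theta_sum X Y A B W r :=
  \sum_(x in X) \sum_(y in Y) #|A :\ x :\ y| * #|B :\ x :\ y| * npath W x r y.

Lemma theta_sum_const m X W r : 2 <= m -> odd r -> #|X| = m -> (forall i, W i = X) ->
  theta_sum X X X X W r = theta_chrom m r.
Proof.
move=> m2 odd_r cardX eqW.
rewrite /theta_sum /theta_chrom -[in RHS]cardX -sum_nat_const cardX.
apply: eq_bigr => x xX; rewrite (bigD1 x) //= (npath_const r m2 cardX eqW xX xX) odd_r eqxx.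
have := card_setD2 X x x; rewrite eqxx xX cardX /= => card_xx.
rewrite (eq_bigr (fun=> (m - 2) ^ 2 * cpath m r)) => [|y /andP[yX yx]]; last first.
  rewrite (npath_const r m2 cardX eqW xX yX) odd_r eq_sym (negbTE yx) addn0.
  have := card_setD2 X x y; rewrite yx yX xX cardX /= => card_xy.
  by rewrite (_ : #|X :\ x :\ y| = m - 2) ?mulnn //; lia.
rewrite sum_nat_const (_ : #|[pred i in X | i != x]| = m.-1); last first.
  rewrite -cardX (cardsD1 x X) xX add1n /=.
  by apply: eq_card => i; rewrite !inE andbC.
rewrite (_ : #|X :\ x :\ x| = m.-1); last by lia.
by rewrite addn1 !expnS expn0 !muln1; nia.
Qed.

Lemma card_setD2_mul_ge m A B x y : 2 <= m -> #|A| = m -> #|B| = m ->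
  (m - 2) ^ 2 + (x == y) * (2 * m - 3) +
  (x != y) * ((m - 2) * ((x \notin A) + (y \notin A) + ((x \notin B) + (y \notin B))))
  <= #|A :\ x :\ y| * #|B :\ x :\ y|.
Proof.
move=> m2 cardA cardB; have := card_setD2 A x y; have := card_setD2 B x y.
rewrite cardA cardB; have [n def_m] : exists n, m = n.+2 by exists (m - 2); lia.
rewrite def_m !expnS expn0 muln1.
have -> : n.+2 - 2 = n by lia.
have -> : 2 * n.+2 - 3 = (2 * n).+1 by lia.
have [<- {y} | xy] := eqVneq x y.
  rewrite /= ?addn0 ?mul0n ?mul1n ?addn0 => cardB2 cardA2.
  have lb_A : n.+1 <= #|A :\ x :\ x| by move: cardA2; case: (x \in A); lia.
  have lb_B : n.+1 <= #|B :\ x :\ x| by move: cardB2; case: (x \in B); lia.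
  by apply: leq_trans (leq_mul lb_A lb_B); nia.
rewrite /= ?mul0n ?addn0 ?mul1n.
move: #|A :\ x :\ y| #|B :\ x :\ y| => a b eq_b eq_a.
have -> : a = n + ((x \notin A) + (y \notin A)).
  by move: eq_a; case: (x \in A); case: (y \in A); lia.
have -> : b = n + ((x \notin B) + (y \notin B)).
  by move: eq_b; case: (x \in B); case: (y \in B); lia.
move: ((x \notin A) + _) ((x \notin B) + _) => p q.
by rewrite mulnDl !mulnDr; lia.
Qed.

Definition nmissing X Y A := \sum_(x in X) \sum_(y in Y) (x != y) * ((x \notin A) + (y \notin A)).

Lemma nmissingE X Y A :
  nmissing X Y A = \sum_z ((z \in X) * (z \notin A) * (#|Y| - (z \in Y)) +
                           (z \in Y) * (z \notin A) * (#|X| - (z \in X))).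
Proof.
rewrite /nmissing [RHS]big_split /=.
under eq_bigr do under eq_bigr do rewrite mulnDr.
under eq_bigr do rewrite big_split /=.
rewrite big_split /= [X in _ + X]exchange_big /=; congr (_ + _).
  rewrite big_mkcond /=; apply: eq_bigr => x _.
  case: (x \in X); rewrite ?mul0n //= mul1n -big_distrl /= mulnC.
  by rewrite sum_neq.
rewrite big_mkcond /=; apply: eq_bigr => y _.
case: (y \in Y); rewrite ?mul0n //= mul1n -big_distrl /= mulnC.
by under eq_bigr do rewrite eq_sym; rewrite sum_neq.
Qed.

Lemma nmissing_ge m X Y A : 2 <= m -> #|X| = m -> #|Y| = m -> #|A| = m ->
  m * (m - #|X :&: Y|) <= nmissing X Y A.
Proof.
move=> m2 cardX cardY cardA; rewrite nmissingE cardX cardY.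
apply: leq_trans (_ : m * #|(X :|: Y) :\: A| <= _).
  rewrite leq_mul2l; apply/orP; right.
  have := cardsUI X Y; have := cardsD (X :|: Y) A.
  have : #|(X :|: Y) :&: A| <= #|A| by apply/subset_leq_card/subsetIr.
  by rewrite cardX cardY cardA; lia.
rewrite -sum_mem_card big_distrr /=; apply: leq_sum => z _; rewrite !inE.
by case: (z \in X); case: (z \in Y); case: (z \in A) => /=; lia.
Qed.

Lemma theta_sum_ge_parts m X Y A B W r :
  2 <= m -> #|A| = m -> #|B| = m -> (forall i, #|W i| = m) ->
  (m - 2) ^ 2 * \sum_(x in X) \sum_(y in Y) npath W x r y
  + (2 * m - 3) * \sum_(x in X) (x \in Y) * npath W x r x
  + (m - 2) * cpath m r * (nmissing X Y A + nmissing X Y B)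
  <= theta_sum X Y A B W r.
Proof.
move=> m2 cardA cardB cardW; pose D x y := (x != y) *
  ((m - 2) * ((x \notin A) + (y \notin A) + ((x \notin B) + (y \notin B)))).
apply: leq_trans (_ : \sum_(x in X) \sum_(y in Y)
  ((m - 2) ^ 2 + (x == y) * (2 * m - 3) + D x y) * npath W x r y <= _); last first.
  apply: leq_sum => x _; apply: leq_sum => y _.
  by rewrite leq_mul2r card_setD2_mul_ge ?orbT.
rewrite [X in _ <= X](eq_bigr (fun x => \sum_(y in Y) (m - 2) ^ 2 * npath W x r y
    + \sum_(y in Y) (x == y) * (2 * m - 3) * npath W x r y
    + \sum_(y in Y) D x y * npath W x r y)); last first.
  by move=> x _; rewrite -!big_split; apply: eq_bigr => y _; rewrite !mulnDl.
rewrite !big_split /=; apply: leq_add; first apply: leq_add.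
- by rewrite big_distrr; apply: eq_leq; apply: eq_bigr => x _; rewrite big_distrr.
- rewrite big_distrr; apply: eq_leq; apply: eq_bigr => x _.
  by under eq_bigr do rewrite -mulnA; rewrite sum_eq_mul mulnCA.
rewrite /nmissing -big_split big_distrr /=; apply: leq_sum => x _.
rewrite -big_split big_distrr /=; apply: leq_sum => y _.
rewrite /D -mulnDr; move: ((x \notin A) + _ + _) => s.
rewrite (_ : _ * _ * _ = (x != y) * ((m - 2) * s) * cpath m r); last by lia.
by rewrite leq_mul2l npath_ge_cpath ?orbT.
Qed.

Lemma theta_sum_ge m X Y A B W r : 3 <= m -> odd r -> 3 <= r ->
  #|X| = m -> #|Y| = m -> #|A| = m -> #|B| = m -> (forall i, #|W i| = m) ->
  theta_chrom m r <= theta_sum X Y A B W r.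
Proof.
move=> m3 odd_r r3 cardX cardY cardA cardB cardW; have m2 : 2 <= m by lia.
apply: leq_trans (theta_sum_ge_parts X Y r m2 cardA cardB cardW).
rewrite theta_chromE // -addnA; apply: leq_add.
  rewrite leq_mul2l -cardX -sum_nat_const cardX; apply/orP; right; apply: leq_sum => x _.
  have [<- _ _] := npath_min_values r m2.
  by have := npath_min_leq_sum x r (Z := Y) cardW; rewrite cardY; apply.
(* If [X = Y] the diagonal is a sum over list colourings of an even cycle;
   otherwise the [m - #|X :&: Y|] missing diagonal terms are paid for by [nmissing]. *)
have [<- | neqXY] := eqVneq X Y.
  apply: leq_trans _ (leq_addr _ _); rewrite (mulnC m) -mulnA leq_mul2l; apply/orP; right.
  apply: leq_trans (ncycle_ge m3 odd_r r3 cardX cardW) _.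
  by apply: eq_leq; apply: eq_bigr => x ->; rewrite mul1n.
have lt_XY : #|X :&: Y| < m.
  rewrite ltn_neqAle -{2}cardX subset_leq_card ?subsetIl // andbT.
  apply: contra neqXY => /eqP cardXY.
  have eqX : X :&: Y == X by rewrite eqEcard subsetIl cardXY cardX leqnn.
  have eqY : X :&: Y == Y by rewrite eqEcard subsetIr cardXY cardY leqnn.
  by rewrite -(eqP eqX).
apply: leq_trans (theta_offdiag_arith m3 (cpath_ge m3 odd_r r3) lt_XY
  (K := nmissing X Y A + nmissing X Y B) _) _.
  rewrite -mulnA mul2n -addnn.
  by apply: leq_add; [exact: nmissing_ge m2 cardX cardY cardA |
                      exact: nmissing_ge m2 cardX cardY cardB].
rewrite leq_add2r leq_mul2l; apply/orP; right.
rewrite -(sum_mem_cond_card X (mem Y)) big_distrr /=; apply: leq_sum => x _.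
by rewrite mulnC leq_mul2l npath_ge_cpath ?orbT.
Qed.

End ThetaSums.

Section ThetaTwoTwoEven.
Variable k : nat.
Hypothesis k_gt0 : 0 < k.
Local Notation l := (tl 2 2 (2 * k)).
Local Notation V := (theta_vertex l).
Local Notation r := (2 * k).-1.

Definition i0 : 'I_3 := Ordinal (isT : 0 < 3).
Definition i1 : 'I_3 := Ordinal (isT : 1 < 3).
Definition i2 : 'I_3 := Ordinal (isT : 2 < 3).

Definition vu : V := inl false.
Definition vw : V := inl true.
Definition va : V := inr (existT _ i0 ord0).
Definition vb : V := inr (existT _ i1 ord0).
Definition vp (j : 'I_r) : V := inr (existT _ i2 j).

Variant theta_vertex_spec : V -> Type :=
  | ThetaU : theta_vertex_spec vu
  | ThetaW : theta_vertex_spec vw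
  | ThetaA : theta_vertex_spec va
  | ThetaB : theta_vertex_spec vb
  | ThetaP j : theta_vertex_spec (vp j).

Lemma theta_vertexP v : theta_vertex_spec v.
Proof.
case: v => [[]|[[[|[|[|i]]] lt_i3] j]] //; [exact: ThetaW | exact: ThetaU | | | ].
- rewrite (eq_irrelevance lt_i3 isT) (ord1 j); exact: ThetaA.
- rewrite (eq_irrelevance lt_i3 isT) (ord1 j); exact: ThetaB.
- rewrite (eq_irrelevance lt_i3 isT); exact: ThetaP.
Qed.

Lemma tl_gt0 i : 0 < l i.
Proof. by case: i => [[|[|[|i]]] lt_i3] //=; rewrite muln_gt0. Qed.

Variable C : finType.

Definition theta_col (x y ca cb : C) (g : {ffun 'I_r -> C}) : {ffun V -> C} :=
  [ffun v : V => match v with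
   | inl false => x
   | inl true => y
   | inr (existT i j) =>
       if val i == 0 then ca else if val i == 1 then cb else
       if insub (val j) : option 'I_r is Some j' then g j' else x
   end].

Lemma theta_col_u x y ca cb g : theta_col x y ca cb g vu = x.
Proof. by rewrite ffunE. Qed.
Lemma theta_col_w x y ca cb g : theta_col x y ca cb g vw = y.
Proof. by rewrite ffunE. Qed.
Lemma theta_col_a x y ca cb g : theta_col x y ca cb g va = ca.
Proof. by rewrite ffunE. Qed.
Lemma theta_col_b x y ca cb g : theta_col x y ca cb g vb = cb.
Proof. by rewrite ffunE. Qed.
Lemma theta_col_p x y ca cb g j : theta_col x y ca cb g (vp j) = g j.
Proof. by rewrite ffunE /= valK. Qed.

Definition theta_colE :=
  (theta_col_u, theta_col_w, theta_col_a, theta_col_b, theta_col_p).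

Lemma sum_theta_col (F : {ffun V -> C} -> nat) :
  \sum_f F f = \sum_x \sum_y \sum_ca \sum_cb \sum_g F (theta_col x y ca cb g).
Proof.
pose col (t : C * C * C * C * {ffun 'I_r -> C}) :=
  let: ((((x, y), ca), cb), g) := t in theta_col x y ca cb g.
have col_bij : bijective col.
  exists (fun f : {ffun V -> C} => ((((f vu, f vw), f va), f vb), [ffun j => f (vp j)])).
    move=> [[[[x y] ca] cb] g] /=; rewrite !theta_colE.
    by congr (_, _); apply/ffunP => j; rewrite ffunE theta_colE.
  move=> f; apply/ffunP => v.
  by case: (theta_vertexP v) => [||||j]; rewrite /= ?theta_colE ?ffunE.
rewrite (reindex col (P := xpredT)) /=; last exact: onW_bij.
by rewrite !pair_bigA; apply: eq_bigr => -[[[[x y] ca] cb] g].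
Qed.

Lemma theta_at_short i : val i < 2 ->
  [/\ theta_at l i 0 = vu, theta_at l i 1 = (if val i == 0 then va else vb)
     & theta_at l i 2 = vw].
Proof.
rewrite /theta_at; case: i => [[|[|i]] lt_i3] //= _;
  rewrite (eq_irrelevance lt_i3 isT).
all: by split=> //; case: insubP => // j _ _; rewrite (ord1 j).
Qed.

Lemma theta_col_long x y ca cb g p : p <= r.+1 ->
  theta_col x y ca cb g (theta_at l i2 p) =
  nth x (x :: rcons [seq g j | j <- enum 'I_r] y) p.
Proof.
rewrite /theta_at; case: p => [|p] le_p; first by rewrite /= ffunE.
rewrite /= nth_rcons size_map size_enum_ord.
case: insubP => [j lt_pr val_j | ge_pr] /=; rewrite ?theta_colE.
  rewrite (lt_pr : p < r) (nth_map j) ?size_enum_ord //.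
  by rewrite -val_j nth_ord_enum.
have -> : p = r by move: ge_pr; rewrite -leqNgt (_ : (l i2).-1 = r) //; lia.
by rewrite ltnn eqxx.
Qed.

Variable enc : C -> nat.
Hypothesis enc_inj : injective enc.

Lemma proper_theta_col x y ca cb g :
  proper (theta_adj l) (fun v => enc (theta_col x y ca cb g v)) =
  [&& ca != x, ca != y, cb != x, cb != y &
      path (fun a b => a != b) x (rcons [seq g j | j <- enum 'I_r] y)].
Proof.
rewrite (proper_theta tl_gt0); set f := theta_col x y ca cb g.
have [u0 a1 w2] := theta_at_short (i := i0) isT.
have [u0' b1 w2'] := theta_at_short (i := i1) isT.
apply/forallP/and5P => [adj | [ax ay bx by_ path_g] i].
  have adj_at i p : p < l i -> f (theta_at l i p) != f (theta_at l i p.+1).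
    by move=> lt_p; have /forallP/(_ (Ordinal lt_p)) := adj i; rewrite inj_eq.
  have := adj_at i0 0 isT; have := adj_at i0 1 isT.
  have := adj_at i1 0 isT; have := adj_at i1 1 isT.
  rewrite u0 a1 w2 u0' b1 w2' /f !theta_colE => bw ub aw ua.
  split => //; try by rewrite eq_sym.
  apply/(pathP x) => p; rewrite size_rcons size_map size_enum_ord => lt_p.
  have /adj_at : p < l i2 by rewrite /tl /=; lia.
  by rewrite /f !theta_col_long // ltnW.
apply/forallP => p; rewrite inj_eq //; move: p.
have [-> | [-> | ->]] : i = i0 \/ i = i1 \/ i = i2.
- by case: i => [[|[|[|i]]] lt_i3] //; [left | right; left | right; right]; apply: val_inj.
- by case=> [[|[|p]] lt_p] //=; rewrite ?u0 ?a1 ?w2 /f !theta_colE // eq_sym.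
- by case=> [[|[|p]] lt_p] //=; rewrite ?u0' ?b1 ?w2' /f !theta_colE // eq_sym.
case=> p lt_p /=; have le_p : p < r.+1 by rewrite /tl /= in lt_p; lia.
rewrite /f !theta_col_long ?(ltnW le_p) //.
by move/(pathP x): path_g; apply; rewrite size_rcons size_map size_enum_ord.
Qed.

(* Past [r] the lists are irrelevant to [npath]; [S vu] keeps them of the
   common size. *)
Definition long_lists (S : V -> {set C}) (n : nat) : {set C} :=
  if insub n : option 'I_r is Some j then S (vp j) else S vu.

Lemma theta_col_list_proper (S : V -> {set C}) x y ca cb g :
  [forall v, theta_col x y ca cb g v \in S v] &&
    proper (theta_adj l) (fun v => enc (theta_col x y ca cb g v)) =
  [&& x \in S vu, y \in S vw, ca \in S va :\ x :\ y, cb \in S vb :\ x :\ y &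
      list_path_colouring (long_lists S) x y g].
Proof.
have -> : [forall v, theta_col x y ca cb g v \in S v] =
  [&& x \in S vu, y \in S vw, ca \in S va, cb \in S vb & [forall j, g j \in S (vp j)]].
  apply/forallP/and5P => [inS | [xS yS caS cbS /forallP gS] v].
    by split; [move: (inS vu) | move: (inS vw) | move: (inS va) | move: (inS vb) |
      apply/forallP => j; move: (inS (vp j))]; rewrite theta_colE.
  by case: (theta_vertexP v) => [||||j]; rewrite theta_colE.
rewrite proper_theta_col /list_path_colouring !inE.
have -> : [forall i : 'I_r, g i \in long_lists S i] = [forall j, g j \in S (vp j)].
  by apply: eq_forallb => j; rewrite /long_lists valK.
by case: (x \in S vu); case: (y \in S vw); case: (ca \in S va); case: (cb \in S vb);
   case: (ca != x); case: (ca != y); case: (cb != x); case: (cb != y); rewrite /= ?andbF.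
Qed.

Lemma card_theta_list_colourings (S : V -> {set C}) :
  #|[set f : {ffun V -> C} | [forall v, f v \in S v] &&
       proper (theta_adj l) (fun v => enc (f v))]| =
  theta_sum (S vu) (S vw) (S va) (S vb) (long_lists S) r.
Proof.
rewrite /theta_sum -sum1_card big_mkcond /= sum_theta_col [RHS]big_mkcond /=.
apply: eq_bigr => x _.
under eq_bigr do under eq_bigr do under eq_bigr do under eq_bigr
  do rewrite inE theta_col_list_proper.
case: (x \in S vu) => /=; last by rewrite !big1.
rewrite [RHS]big_mkcond /=; apply: eq_bigr => y _.
case: (y \in S vw) => /=; last by rewrite !big1.
rewrite npathE -!sum_mem_card big_distrl big_distrl /=; apply: eq_bigr => ca _.
rewrite -mulnA big_distrl big_distrr /=; apply: eq_bigr => cb _.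
rewrite !big_distrr /=; apply: eq_bigr => g _.
by case: (ca \in _); case: (cb \in _); case: list_path_colouring.
Qed.

End ThetaTwoTwoEven.

Lemma card_ord_in_list n (L : seq nat) : uniq L -> {in L, forall c, c < n} ->
  #|[set c : 'I_n | val c \in L]| = size L.
Proof.
move=> uniq_L lt_L.
rewrite (eq_card (B := [pred c : 'I_n | c \in pmap insub L])); last first.
  by move=> c; rewrite !inE mem_pmap_sub.
rewrite (card_uniqP _) ?pmap_sub_uniq // size_pmap_sub; apply/eqP.
by rewrite -all_count; apply/allP.
Qed.

Lemma color_bound_gt (V : finType) (L : V -> seq nat) v c :
  c \in L v -> c < color_bound L.
Proof. by move=> cL; apply: leq_trans (leq_bigmax v); apply: (leq_bigmax_seq c cL). Qed.

Definition list_set (V : finType) (L : V -> seq nat) v : {set 'I_(color_bound L)} :=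
  [set c | val c \in L v].

Lemma odd_pred_mul2 k : 0 < k -> odd (2 * k).-1.
Proof. by move=> k_gt0; rewrite -subn1 oddB ?muln_gt0 // oddM. Qed.

Lemma card_list_set (V : finType) m (L : V -> seq nat) v : m_assignment m L ->
  #|list_set L v| = m.
Proof.
move=> assign_L; have [uniq_L size_L] := assign_L v.
by rewrite card_ord_in_list // => c; apply: color_bound_gt.
Qed.

Section ThetaTwoTwoEvenColourings.
Variable k : nat.
Hypothesis k_gt0 : 0 < k.
Local Notation l := (tl 2 2 (2 * k)).
Local Notation V := (theta_vertex l).
Local Notation r := (2 * k).-1.

Lemma chrom_theta m : 2 <= m -> chrom V (theta_adj l) m = theta_chrom m r.
Proof.
move=> m_ge2; have -> : chrom V (theta_adj l) m =
    #|[set f : {ffun V -> 'I_m} | [forall v, f v \in [set: 'I_m]] &&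
        proper (theta_adj l) (fun v => val (f v))]|.
  apply: eq_card => f; rewrite !inE.
  by have -> : [forall v, f v \in [set: 'I_m]] by apply/forallP => v; rewrite inE.
rewrite (card_theta_list_colourings k_gt0 val_inj (fun=> [set: 'I_m])).
apply: theta_sum_const m_ge2 (odd_pred_mul2 k_gt0) _ _; first by rewrite cardsT card_ord.
by move=> i; rewrite /long_lists; case: insub.
Qed.

Lemma P_list_theta (L : V -> seq nat) :
  P_list (theta_adj l) L =
  theta_sum (list_set L (vu k)) (list_set L (vw k)) (list_set L (va k))
            (list_set L (vb k)) (long_lists (list_set L)) r.
Proof.
rewrite /P_list -(card_theta_list_colourings k_gt0 val_inj).
by apply: eq_card => f; rewrite !inE; congr (_ && _); apply: eq_forallb => v; rewrite inE.
Qed.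

End ThetaTwoTwoEvenColourings.

Theorem theorem11 (k m : nat) : 2 <= k -> 3 <= m ->
  let l := tl 2 2 (2 * k) in
  is_list_color_fun (theta_vertex l) (theta_adj l) m
                    (chrom (theta_vertex l) (theta_adj l) m).
Proof.
move=> k_ge2 m_ge3 /=; have k_gt0 : 0 < k by lia.
have card_lists (L : theta_vertex (tl 2 2 (2 * k)) -> seq nat) :
    m_assignment m L -> forall i, #|long_lists (list_set L) i| = m.
  by move=> assign_L i; rewrite /long_lists; case: insub => [j|]; exact: card_list_set.
rewrite chrom_theta //; last by lia.
split=> [|L assign_L].
  have assign_iota : m_assignment m (fun _ : theta_vertex (tl 2 2 (2 * k)) => iota 0 m).
    by move=> v; split; [exact: iota_uniq | exact: size_iota].
  exists (fun=> iota 0 m); split => //; rewrite P_list_theta //.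
  apply: theta_sum_const (ltnW m_ge3) (odd_pred_mul2 k_gt0) (card_list_set (vu k) assign_iota) _.
  by move=> i; rewrite /long_lists; case: insub.
rewrite P_list_theta //.
apply: theta_sum_ge m_ge3 (odd_pred_mul2 k_gt0) _ _ _ _ _ (card_lists L assign_L);
  try exact: card_list_set.
lia.
Qed.
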